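(* For every $m\in\mathbb{N}$, $\mathscr{G}^{(m)}\setminus\mathscr{G}^{(m-1)}\neq\emptyset$. In particular, if $K_{m+1}$ denotes the complete graph on $m+1$ vertices, then $K_{m+1}\in\mathscr{G}^{(m)}\setminus\mathscr{G}^{(m-1)}$.
   Context: All graphs are finite simplicial graphs (undirected, no loops, at most one edge between two vertices). Pinning: for graphs $\Gamma,\Gamma'$ and $v\in V\Gamma$, the graph $\Phi_{(\Gamma,v)}(\Gamma')$ has vertex set $V\Gamma\sqcup V\Gamma'$ and edge set $E\Gamma\sqcup E\Gamma'\sqcup\{(w,v):w\in V\Gamma'\}$ (''pinning $\Gamma'$ to $\Gamma$ at $v$''). Let $\mathscr{G}^{(0)}$ consist of the single-vertex graph. Recursively, $\mathscr{G}^{(m+1)}$ is the class of graphs obtained by repeatedly appending a graph from $\mathscr{G}^{(m)}$ to the graph built so far, each time either (1) leaving the appended graph disjoint (no edges to the previous graph), or (2) pinning the appended graph to the previous graph at some vertex. Thus $\mathscr{G}^{(1)}$ consists of graphs built by successively adding a vertex that is either isolated or adjacent to exactly one existing vertex. *)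

From mathcomp Require Import all_boot.
Set Implicit Arguments. Unset Strict Implicit. Unset Printing Implicit Defensive.

(* A finite graph on the vertex set 'I_gn with adjacency relation gadj.
   All graphs produced below are simple (symmetric, irreflexive). *)
Record graph := Graph { gn : nat; gadj : rel 'I_gn }.
Arguments gadj : clear implicits.

Definition simple_graph (G : graph) : Prop :=
  (forall x y, gadj G x y = gadj G y x) /\ (forall x, gadj G x x = false).

Definition graph_iso (G H : graph) : Prop :=
  exists f : 'I_(gn G) -> 'I_(gn H),
    bijective f /\ forall x y, gadj H (f x) (f y) = gadj G x y.

Definition disj_union (G H : graph) : graph :=
  @Graph (gn G + gn H) (fun x y =>
    match split x, split y with
    | inl a, inl b => gadj G a b
    | inr a, inr b => gadj H a b
    | _, _ => false
    end).

Definition pin (G : graph) (v : 'I_(gn G)) (H : graph) : graph :=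
  @Graph (gn G + gn H) (fun x y =>
    match split x, split y with
    | inl a, inl b => gadj G a b
    | inr a, inr b => gadj H a b
    | inl a, inr _ => a == v
    | inr _, inl b => b == v
    end).

Definition single_vertex : graph := @Graph 1 (fun _ _ => false).

Definition complete_graph (n : nat) : graph := @Graph n (fun x y => x != y).

Inductive built : nat -> graph -> Prop :=
| built0 : built 0 single_vertex
| built_start m G : built m G -> built m.+1 G
| built_disj m G H : built m.+1 G -> built m H -> built m.+1 (disj_union G H)
| built_pin m G (v : 'I_(gn G)) H :
    built m.+1 G -> built m H -> built m.+1 (pin v H).

Definition inG (m : nat) (G : graph) : Prop :=
  exists G0, built m G0 /\ graph_iso G G0.

From mathcomp Require Import all_boot.

Set Implicit Arguments.
Unset Strict Implicit.
Unset Printing Implicit Defensive.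

(** The clique number is the invariant separating the classes: it grows by at
   most one per level, since a clique of a disjoint union lies on one side and
   a clique of [pin v H] meets the old graph at most in the pin vertex [v].
   Hence every graph of G^(m) has clique number at most [m+1], so [K_(m+2)]
   is not in G^(m); conversely [K_(m+1)] is [K_m] pinned to a single vertex. *)

Definition clique {G : graph} (S : {set 'I_(gn G)}) : Prop :=
  {in S &, forall x y, x != y -> gadj G x y}.

Definition clique_num_le (k : nat) (G : graph) : Prop :=
  forall S : {set 'I_(gn G)}, clique S -> #|S| <= k.

Section CliqueTransport.

Variables (G H : graph) (f : 'I_(gn G) -> 'I_(gn H)).
Hypothesis f_adj : forall x y, gadj H (f x) (f y) = gadj G x y.

Lemma clique_imset (S : {set 'I_(gn G)}) : clique S -> clique (f @: S).
Proof.
move=> cS _ _ /imsetP[x xS ->] /imsetP[y yS ->] fxy.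
by rewrite f_adj cS //; apply: contraNneq fxy => ->.
Qed.

Lemma clique_preimset (S : {set 'I_(gn H)}) :
  injective f -> clique S -> clique (f @^-1: S).
Proof.
move=> f_inj cS x y; rewrite !inE => xS yS xy.
by rewrite -f_adj cS // (inj_eq f_inj).
Qed.

End CliqueTransport.

Lemma graph_iso_clique_num_le k G H :
  graph_iso G H -> clique_num_le k H -> clique_num_le k G.
Proof.
move=> [f [/bij_inj f_inj f_adj]] omegaH S cS.
by rewrite -(card_imset S f_inj); apply/omegaH/clique_imset.
Qed.

Lemma complete_graph_clique_num_le k n :
  clique_num_le k (complete_graph n) -> n <= k.
Proof. by move=> omegaK; rewrite -[n]card_ord -cardsT; apply: omegaK. Qed.

Section SplitVertices.

Variables n1 n2 : nat.

Lemma split_lshift (a : 'I_n1) : split (lshift n2 a) = inl a.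
Proof. exact: (unsplitK (inl a)). Qed.

Lemma split_rshift (b : 'I_n2) : split (rshift n1 b) = inr b.
Proof. exact: (unsplitK (inr b)). Qed.

Lemma card_split (S : {set 'I_(n1 + n2)}) :
  #|S| = #|lshift n2 @^-1: S| + #|@rshift n1 n2 @^-1: S|.
Proof.
rewrite -!sum1_card big_split_ord /=.
by congr (_ + _); apply: eq_bigl => i; rewrite inE.
Qed.

End SplitVertices.

Section UnionAndPin.

Variables G H : graph.

Lemma disj_union_adj_lshift a b :
  gadj (disj_union G H) (lshift _ a) (lshift _ b) = gadj G a b.
Proof. by rewrite /= !split_lshift. Qed.

Lemma disj_union_adj_rshift a b :
  gadj (disj_union G H) (rshift _ a) (rshift _ b) = gadj H a b.
Proof. by rewrite /= !split_rshift. Qed.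

Lemma disj_union_adj_lrshift a b :
  gadj (disj_union G H) (lshift _ a) (rshift _ b) = false.
Proof. by rewrite /= split_lshift split_rshift. Qed.

Variable v : 'I_(gn G).

Lemma pin_adj_lshift a b : gadj (pin v H) (lshift _ a) (lshift _ b) = gadj G a b.
Proof. by rewrite /= !split_lshift. Qed.

Lemma pin_adj_rshift a b : gadj (pin v H) (rshift _ a) (rshift _ b) = gadj H a b.
Proof. by rewrite /= !split_rshift. Qed.

Lemma pin_adj_lrshift a b : gadj (pin v H) (lshift _ a) (rshift _ b) = (a == v).
Proof. by rewrite /= split_lshift split_rshift. Qed.

Lemma pin_adj_rlshift a b : gadj (pin v H) (rshift _ a) (lshift _ b) = (b == v).
Proof. by rewrite /= split_lshift split_rshift. Qed.

Lemma disj_union_clique_num_le k l :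
  clique_num_le k G -> clique_num_le l H ->
  clique_num_le (maxn k l) (disj_union G H).
Proof.
move=> omegaG omegaH S cS; rewrite card_split.
have cL := clique_preimset disj_union_adj_lshift (@lshift_inj _ _) cS.
have cR := clique_preimset disj_union_adj_rshift (@rshift_inj _ _) cS.
have [-> | [b bR]] := set_0Vmem (@rshift (gn G) (gn H) @^-1: S).
  by rewrite cards0 addn0 leq_max omegaG.
have [-> | [a aL]] := set_0Vmem (lshift (gn H) @^-1: S).
  by rewrite cards0 leq_max omegaH ?orbT.
move: aL bR; rewrite !inE => aS bS.
by have := cS _ _ aS bS; rewrite eq_lrshift disj_union_adj_lrshift => /(_ isT).
Qed.

Lemma pin_clique_num_le k l :
  clique_num_le k G -> clique_num_le l H -> clique_num_le (maxn k l.+1) (pin v H).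
Proof.
move=> omegaG omegaH S cS; rewrite card_split.
have cL := clique_preimset pin_adj_lshift (@lshift_inj _ _) cS.
have cR := clique_preimset pin_adj_rshift (@rshift_inj _ _) cS.
have [-> | [b bR]] := set_0Vmem (@rshift (gn G) (gn H) @^-1: S).
  by rewrite cards0 addn0 leq_max omegaG.
have L_sub_v : lshift (gn H) @^-1: S \subset [set v].
  apply/subsetP => a; move: bR; rewrite !inE => bS aS.
  by rewrite -(pin_adj_lrshift a b) cS // eq_lrshift.
rewrite leq_max -add1n orbC leq_add ?omegaH //.
by rewrite -(cards1 v) subset_leq_card.
Qed.

End UnionAndPin.

Lemma built_clique_num_le m G : built m G -> clique_num_le m.+1 G.
Proof.
elim=> {m G} [S _ | m G _ omegaG | m G H _ omegaG _ omegaH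
             | m G v H _ omegaG _ omegaH].
- by rewrite -[1]card_ord max_card.
- by move=> S /omegaG /leqW.
- by rewrite -[m.+2](maxn_idPl (leqnSn m.+1)); apply: disj_union_clique_num_le.
- by rewrite -[m.+2]maxnn; apply: pin_clique_num_le.
Qed.

Lemma inG_clique_num_le m G : inG m G -> clique_num_le m.+1 G.
Proof.
by move=> [G0 [builtG0 isoG]]; apply: graph_iso_clique_num_le isoG _;
  apply: built_clique_num_le.
Qed.

Lemma complete_graph_notin_inG m : ~ inG m (complete_graph m.+2).
Proof.
by move=> /inG_clique_num_le /complete_graph_clique_num_le; rewrite ltnn.
Qed.

Definition is_complete (G : graph) : Prop := forall x y, gadj G x y = (x != y).

Lemma pin_single_vertex_complete H :
  is_complete H -> is_complete (pin (ord0 : 'I_(gn single_vertex)) H).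
Proof.
move=> H_complete x y.
case: (split_ordP x) => a ->; case: (split_ordP y) => b ->.
- by rewrite pin_adj_lshift !ord1 eqxx.
- by rewrite pin_adj_lrshift ord1 eqxx eq_lrshift.
- by rewrite pin_adj_rlshift ord1 eqxx eq_rlshift.
- by rewrite pin_adj_rshift H_complete eq_rshift.
Qed.

Lemma built_complete k :
  exists2 G, built k G & is_complete G /\ gn G = k.+1.
Proof.
have built_single j : built j single_vertex.
  by elim: j => [| j IHj]; [exact: built0 | exact: built_start].
elim: k => [| k [G builtG [G_complete nG]]].
  by exists single_vertex; [exact: built0 | split=> // x y; rewrite !ord1].
exists (pin (ord0 : 'I_(gn single_vertex)) G); first exact: built_pin.
by split; [exact: pin_single_vertex_complete | rewrite /= nG].
Qed.

Lemma complete_graph_inG m : inG m (complete_graph m.+1).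
Proof.
have [G builtG [G_complete <-]] := built_complete m.
exists G; split=> //; exists id; split; first by exists id.
by move=> x y; rewrite G_complete.
Qed.

Theorem proposition2p7 (m : nat) (hm : 0 < m) :
  (exists G : graph, inG m G /\ ~ inG m.-1 G) /\
  (inG m (complete_graph m.+1) /\ ~ inG m.-1 (complete_graph m.+1)).
Proof.
case: m hm => // m _ /=.
have K_sep : inG m.+1 (complete_graph m.+2) /\ ~ inG m (complete_graph m.+2).
  by split; [exact: complete_graph_inG | exact: complete_graph_notin_inG].
by split=> //; exists (complete_graph m.+2).
Qed.
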